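(* Let $\mathcal{I}$ be an ideal. (a) $\mathrm{Fin}^2\sqsubseteq\mathcal{I}$ if and only if $\mathrm{FinBW}(\mathcal{I})$ consists exactly of the finite (Hausdorff) spaces. (b) $\mathcal{I}$ is boring and $\mathrm{Fin}^2\not\sqsubseteq\mathcal{I}$ if and only if $\mathrm{FinBW}(\mathcal{I})$ consists exactly of the (Hausdorff) boring spaces. (c) $\mathcal{I}$ is not tall if and only if $\mathrm{FinBW}(\mathcal{I})$ consists exactly of the (Hausdorff) sequentially compact spaces.
   Context: An ideal on an infinite countable set $X$ is a family $\mathcal{I}\subseteq\mathcal{P}(X)$ closed under subsets and finite unions, containing all finite subsets, with $X\notin\mathcal{I}$. $\mathcal{I}$ is tall if every infinite $A\subseteq X$ has an infinite subset in $\mathcal{I}$. A space $X$ is in $\mathrm{FinBW}(\mathcal{I})$ if $X$ is Hausdorff and for every sequence $(x_n)_{n\in\bigcup\mathcal{I}}$ in $X$ there is $A\notin\mathcal{I}$ with $(x_n)_{n\in A}$ convergent in $X$. $\mathrm{Fin}^2$: ideal on $\omega^2$ of all $A$ with only finitely many $n$ such that $\{m:(n,m)\in A\}$ is infinite. $\mathcal{BI}$: ideal on $\omega^3$ of all $A$ for which there is $k$ with $\{(j,l):(i,j,l)\in A\}\in\mathrm{Fin}^2$ for $i<k$ and finite for $i\ge k$. $\mathcal{I}\sqsubseteq\mathcal{J}$: there is a bijection $f:\bigcup\mathcal{J}\to\bigcup\mathcal{I}$ with $f^{-1}[A]\in\mathcal{J}$ for all $A\in\mathcal{I}$. An ideal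 $\mathcal{I}$ is boring if $\mathcal{BI}\sqsubseteq\mathcal{I}$. A topological space $X$ is boring if it is sequentially compact and there is a finite $F\subseteq X$ such that every convergent sequence in $X$ with infinitely many distinct values converges to some point of $F$. *)

From HB Require Import structures.
From mathcomp Require Import all_boot all_order.
From mathcomp Require Import boolp classical_sets functions cardinality topology.
Set Implicit Arguments.
Unset Strict Implicit.
Unset Printing Implicit Defensive.
Local Open Scope classical_set_scope.

Definition is_ideal (X : Type) (I : set (set X)) : Prop :=
  (forall A B, I B -> A `<=` B -> I A) /\
  (forall A B, I A -> I B -> I (A `|` B)) /\
  (forall A, finite_set A -> I A) /\
  ~ I [set: X].

Definition tall (X : Type) (I : set (set X)) : Prop :=
  forall A : set X, infinite_set A ->
    exists B, B `<=` A /\ infinite_set B /\ I B.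

Definition Fin2 : set (set (nat * nat)) :=
  fun A => finite_set [set n | infinite_set [set m | A (n, m)]].

Definition BI : set (set (nat * (nat * nat))) :=
  fun A => exists k : nat,
    (forall i, (i < k)%N -> Fin2 [set jl | A (i, jl)]) /\
    (forall i, (k <= i)%N -> finite_set [set jl | A (i, jl)]).

(* I ⊑ J : a bijection f : ⋃J -> ⋃I with f^{-1}[A] ∈ J for A ∈ I.
   (For ideals, ⋃I is the whole carrier since singletons belong to I.) *)
Definition ideal_le (X Y : Type) (I : set (set X)) (J : set (set Y)) : Prop :=
  exists f : Y -> X, bijective f /\ forall A, I A -> J (f @^-1` A).

Definition boring_ideal (X : Type) (I : set (set X)) : Prop := ideal_le BI I.

Definition conv_along (X : Type) (T : topologicalType) (x : X -> T)
    (A : set X) (y : T) : Prop :=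
  forall U, nbhs y U -> finite_set [set n | A n /\ ~ U (x n)].

Definition FinBW (X : Type) (I : set (set X)) (T : topologicalType) : Prop :=
  hausdorff_space T /\
  forall x : X -> T, exists A : set X, ~ I A /\ exists y : T, conv_along x A y.

Definition seq_compact (T : topologicalType) : Prop :=
  forall s : nat -> T, exists phi : nat -> nat,
    {homo phi : m n / (m < n)%N} /\ exists y : T, (s \o phi) @ \oo --> y.

Definition boring_space (T : topologicalType) : Prop :=
  seq_compact T /\
  exists F : set T, finite_set F /\
    forall s : nat -> T, infinite_set (range s) ->
      (exists y : T, s @ \oo --> y) -> exists y, F y /\ s @ \oo --> y.

(* An ideal [I] on a countable set contains a copy of
   Fin^2 as soon as [X] is partitioned into sets of [I] such that every set meeting each
   part finitely is in [I].  If moreover the parts are grouped into blocks, every subset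
   of a block meeting each part finitely is in [I], every set meeting each block finitely
   is in [I], and Fin^2 does not embed, then BI embeds in [I].  When [x : X -> T]
   witnesses the failure of FinBW(I), every index set along which [x] converges is in
   [I]; its fibres then satisfy the first criterion when [T] is boring (a finite set plus
   finitely many sets converging to points), and the second one for [T] = omega^2 + 1,
   with the columns as blocks.
   Conversely, a copy of Fin^2 in [I] defeats FinBW(I) in every infinite Hausdorff space
   (send column [n] to the [n]-th of infinitely many distinct points), a copy of BI does
   so in every sequentially compact space that is not boring (it carries infinitely many
   disjoint sets converging to distinct points), and a tall ideal contains a maximal
   almost disjoint family whose Mrowka space is sequentially compact but not in
   FinBW(I).  Finite spaces are in FinBW(I) by pigeonhole, and if [I] is not tall,
   restricting a sequence to an infinite set without infinite subsets in [I] shows that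
   sequentially compact spaces are in FinBW(I). *)

From HB Require Import structures.
From mathcomp Require Import all_boot all_order.
From mathcomp Require Import boolp classical_sets functions cardinality topology.
Set Implicit Arguments.
Unset Strict Implicit.
Unset Printing Implicit Defensive.
Local Open Scope classical_set_scope.

Lemma finite_nat_bounded (A : set nat) :
  finite_set A -> exists N, forall n, A n -> (n < N)%N.
Proof.
move=> /finite_seqP[s ->]; exists (\max_(i <- s) i).+1 => n /= ns.
by rewrite ltnS; apply: leq_bigmax_seq.
Qed.

Lemma subsingleton_finite (T : Type) (A : set T) :
  (forall a b, A a -> A b -> a = b) -> finite_set A.
Proof.
move=> h; have [[a Aa]|/nonemptyPn ->] := pselect (A !=set0); last exact: finite_set0.
by apply: sub_finite_set (finite_set1 a) => b Ab; apply: h.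
Qed.

Lemma image_infinite (S T : Type) (f : S -> T) (A : set S) :
  injective f -> infinite_set A -> infinite_set (f @` A).
Proof.
move=> f_inj; have f_inj' : {in A &, injective f} by move=> a b _ _; apply: f_inj.
by rewrite (eq_finite_set (inj_card_eq f_inj')).
Qed.

Lemma injective_range_infinite (T : Type) (e : nat -> T) :
  injective e -> infinite_set (range e).
Proof. by move=> e_inj; apply: image_infinite e_inj infinite_nat. Qed.

Lemma infinite_set_injseq (T : Type) (A : set T) : infinite_set A ->
  exists e : nat -> T, (forall n, A (e n)) /\ injective e.
Proof.
elim/Ppointed: T A => T A.
  by move=> Ainf; exfalso; apply: Ainf; rewrite (empty_eq0 A); exact: finite_set0.
move=> /infiniteP /pcard_leP [f]; exists f; split; last exact: injT.
by move=> n; apply: (@funS _ _ _ _ f).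
Qed.

Lemma countable_infinite_enum (T : Type) (A : set T) :
  countable A -> infinite_set A ->
  exists e : nat -> T, [/\ forall n, A (e n), injective e &
    forall x, A x -> exists n, e n = x].
Proof.
move=> cA iA; have /card_set_bijP[f [fF fI fS]] := eq_card_nat cA iA.
have /choice[e he] : forall n, exists x, A x /\ f x = n.
  by move=> n; have [x Ax fx] := fS n I; exists x.
exists e; split; first by move=> n; case: (he n).
  by move=> m n emn; rewrite -(he m).2 -(he n).2 emn.
move=> x Ax; exists (f x); apply: fI; rewrite ?in_setE //; first by case: (he (f x)).
by rewrite (he (f x)).2.
Qed.

Lemma infinite_nat_increasing (N : set nat) : infinite_set N ->
  exists phi : nat -> nat, (forall k, N (phi k)) /\ {homo phi : m n / (m < n)%N}.
Proof.
move=> iN; have /choice[next hnext] : forall m, exists n, N n /\ (m < n)%N.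
  move=> m; apply: contrapT => hn; apply: iN.
  apply: (sub_finite_set _ (finite_II m.+1)) => n Nn /=.
  by rewrite ltnS leqNgt; apply/negP => mn; apply: hn; exists n.
exists (fun k => iter k.+1 next 0%N); split; first by move=> k; case: (hnext (iter k next 0%N)).
by apply: homo_ltn => [|k]; [exact: ltn_trans|case: (hnext (iter k.+1 next 0%N))].
Qed.

Lemma finite_fibers_preimage (S T : Type) (x : S -> T) (B : set S) (K : set T) :
  (forall t, finite_set (B `&` x @^-1` [set t])) -> finite_set K ->
  finite_set (B `&` x @^-1` K).
Proof.
move=> hB fK; apply: sub_finite_set (bigcup_finite fK (fun t _ => hB t)) => n [Bn Kxn].
by exists (x n).
Qed.

Section Ideal.
Context (X : Type) (I : set (set X)) (hI : is_ideal I).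

Lemma ideal_sub A B : I B -> A `<=` B -> I A.
Proof. by case: hI => h _ ?; exact: h. Qed.

Lemma idealU A B : I A -> I B -> I (A `|` B).
Proof. by case: hI => _ [h _] ?; exact: h. Qed.

Lemma ideal_finite A : finite_set A -> I A.
Proof. by case: hI => _ [_ [h _]]; exact: h. Qed.

Lemma ideal_setT : ~ I [set: X].
Proof. by case: hI => _ [_ [_ h]]. Qed.

Lemma ideal_bigcup (K : Type) (D : set K) (F : K -> set X) :
  finite_set D -> (forall k, D k -> I (F k)) -> I (\bigcup_(k in D) F k).
Proof.
elim/Peq: K D F => K D F /finite_seqP[s ->].
elim: s => [|a s IH] h.
  by apply: (ideal_sub (ideal_finite (finite_set0 X))) => x [k].
apply: (ideal_sub (idealU (h a _) (IH _))).
- by rewrite /= inE eqxx.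
- by move=> k ks; apply: h; rewrite /= inE ks orbT.
move=> x [k /=]; rewrite inE => /orP[/eqP -> |ks] Fx; first by left.
by right; exists k.
Qed.

End Ideal.

Section ConvAlong.
Context (X : Type) (T : topologicalType).
Implicit Types (x : X -> T) (A B : set X).

Lemma conv_alongS x A B y : B `<=` A -> conv_along x A y -> conv_along x B y.
Proof.
move=> BA h U hU; apply: sub_finite_set (h U hU) => n [Bn Un]; split=> //.
exact: BA.
Qed.

Lemma conv_along_cst x A p : (forall n, A n -> x n = p) -> conv_along x A p.
Proof.
move=> h U hU; apply: sub_finite_set (finite_set0 X) => n [An]; rewrite h //.
by move/(_ (nbhs_singleton hU)).
Qed.

Lemma conv_along_unique (hT : hausdorff_space T) x A y z : infinite_set A ->
  conv_along x A y -> conv_along x A z -> y = z.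
Proof.
move=> iA hy hz; apply: hT => U V yU zV; apply: contrapT => hne; apply: iA.
have : finite_set ([set n | A n /\ ~ U (x n)] `|` [set n | A n /\ ~ V (x n)]).
  by rewrite finite_setU; split; [apply: hy|apply: hz].
apply: sub_finite_set => n An.
have [Un|nUn] := pselect (U (x n)); last by left.
have [Vn|nVn] := pselect (V (x n)); last by right.
by exfalso; apply: hne; exists (x n).
Qed.

Lemma conv_along_cst_unique (hT : hausdorff_space T) x A A' p y :
  A' `<=` A -> infinite_set A' -> (forall n, A' n -> x n = p) ->
  conv_along x A y -> p = y.
Proof.
move=> AA iA' hp hy; apply: (conv_along_unique hT iA' (conv_along_cst hp)).
exact: conv_alongS hy.
Qed.

End ConvAlong.

Lemma conv_along_comp (S X : Type) (T : topologicalType) (g : S -> X) (x : X -> T)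
    (A : set X) y :
  injective g -> conv_along x A y -> conv_along (x \o g) (g @^-1` A) y.
Proof.
move=> gi h U hU; have gi' : {in g @^-1` [set n | A n /\ ~ U (x n)] &, injective g}.
  by move=> a b _ _; apply: gi.
exact: finite_preimage gi' (h U hU).
Qed.

Lemma conv_along_image (S X : Type) (T : topologicalType) (g : S -> X) (x : X -> T)
    (A : set S) y :
  conv_along (x \o g) A y -> conv_along x (g @` A) y.
Proof.
move=> h U hU; apply: sub_finite_set (finite_image g (h U hU)).
by move=> _ [[n An <-] nU]; exists n.
Qed.

Lemma conv_along_fibers (S : Type) (T : topologicalType) (x : S -> T) (B : set S)
    (W : set T) y :
  (forall t, finite_set (B `&` x @^-1` [set t])) -> conv_along id W y ->
  conv_along x (B `&` x @^-1` W) y.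
Proof.
move=> hB hW V hV; apply: sub_finite_set (finite_fibers_preimage hB (hW V hV)).
by move=> n [[Bn Wn] nV].
Qed.

Lemma cvg_conv_alongT (T : topologicalType) (s : nat -> T) (y : T) :
  s @ \oo --> y <-> conv_along s [set: nat] y.
Proof.
split=> h U hU.
  have [M _ hM] := h U hU; apply: (sub_finite_set _ (finite_II M)) => n [_ nU] /=.
  by rewrite ltnNge; apply/negP => /hM.
have /finite_nat_bounded[M hM] := h U hU; exists M => // n /= Mn.
by apply: contrapT => nU; move: (hM n (conj I nU)); rewrite ltnNge Mn.
Qed.

Definition seq_compact_along (T : topologicalType) := forall s : nat -> T,
  exists2 N : set nat, infinite_set N & exists y, conv_along s N y.

Lemma seq_compactP (T : topologicalType) : seq_compact T <-> seq_compact_along T.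
Proof.
split=> h s.
  have [phi [phi_incr [y /cvg_conv_alongT hy]]] := h s.
  exists (range phi); first exact/injective_range_infinite/incn_inj/leq_mono.
  by exists y; apply: conv_along_image.
have [N iN [y hy]] := h s; have [phi [Nphi phi_incr]] := infinite_nat_increasing iN.
exists phi; split => //; exists y; apply/cvg_conv_alongT.
apply: conv_alongS (conv_along_comp (incn_inj (leq_mono phi_incr)) hy).
by move=> k _; apply: Nphi.
Qed.

Lemma nbhs_open_sub (T : topologicalType) (p : T) U : nbhs p U ->
  exists V, [/\ open V, V p & V `<=` U].
Proof. by rewrite nbhsE => -[V [oV Vp] VU]; exists V. Qed.

Section OpenSeparation.
Context (T : topologicalType).

Definition open_separated (p q : T) :=
  exists A B : set T, [/\ open A, open B, A p, B q & A `&` B = set0].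

Lemma open_separated_sym (p q : T) : open_separated p q -> open_separated q p.
Proof. by move=> [A [B [oA oB Ap Bq AB0]]]; exists B, A; split => //; rewrite setIC. Qed.

Lemma hausdorff_open_separated :
  (forall p q, p <> q -> open_separated p q) -> hausdorff_space T.
Proof.
move=> h p q cl; apply: contrapT => /h[A [B [oA oB Ap Bq AB0]]].
have [t [At Bt]] := cl A B (open_nbhs_nbhs (conj oA Ap)) (open_nbhs_nbhs (conj oB Bq)).
by have : (A `&` B) t by []; rewrite AB0.
Qed.

Lemma clopen_separated (A : set T) p q : open A -> open (~` A) -> A p -> ~ A q ->
  open_separated p q.
Proof. by move=> oA oCA Ap nAq; exists A, (~` A); split => //; rewrite setICr. Qed.

Lemma isolated_separated (p q : T) : p <> q -> open [set p] -> open (~` [set p]) ->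
  open_separated p q.
Proof. by move=> pq o1 o2; apply: clopen_separated o1 o2 _ _ => // qp; apply: pq. Qed.

Lemma hausdorff_sep (hT : hausdorff_space T) (p q : T) : p <> q ->
  exists A B, [/\ nbhs p A, nbhs q B & A `&` B = set0].
Proof.
move=> pq; apply: contrapT => hn; apply: pq; apply: hT => A B hA hB.
apply/set0P/negP => /eqP AB0; apply: hn; by exists A, B.
Qed.

End OpenSeparation.

(** * Criteria for embedding Fin^2 and BI *)

Definition is_partition (K X : Type) (P : K -> set X) :=
  (forall x, exists k, P k x) /\ (forall k k' x, P k x -> P k' x -> k = k').

Lemma fibers_partition (X T : Type) (x : X -> T) : is_partition (fun t => x @^-1` [set t]).
Proof. by split=> [a|t t' a /= <- <-]; first by exists (x a). Qed.

Lemma partition_bijection (X K : Type) (Q : K -> set X) :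
  countable [set: X] -> is_partition Q -> (forall k, infinite_set (Q k)) ->
  exists f : X -> K * nat, bijective f /\ forall x, Q (f x).1 x.
Proof.
move=> cX [cover disj] iQ.
have /choice[e he] : forall k, exists e : nat -> X, [/\ forall n, Q k (e n),
    injective e & forall x, Q k x -> exists n, e n = x].
  move=> k; apply: countable_infinite_enum (iQ k).
  exact: sub_countable (subset_card_le (subsetT (Q k))) cX.
have /choice[f hf] : forall x, exists p : K * nat, Q p.1 x /\ e p.1 p.2 = x.
  move=> x; have [k Qkx] := cover x; have [_ _ /(_ x Qkx)[n en]] := he k.
  by exists (k, n).
exists f; split; last by move=> x; case: (hf x).
exists (fun p => e p.1 p.2); first by move=> x; case: (hf x).
move=> [k n]; have [ek e_inj _] := he k; case: (hf (e k n)).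
case: (f (e k n)) => k' n' /= Qf ef; have kk' := disj _ _ _ Qf (ek n); subst k'.
by rewrite (e_inj _ _ ef).
Qed.

Lemma partition_fiberE (K X : Type) (Q : K -> set X) (f : X -> K * nat) k :
  is_partition Q -> (forall x, Q (f x).1 x) -> [set x | (f x).1 = k] = Q k.
Proof.
move=> [_ disj] fQ; apply/seteqP; split => x /=; first by move=> <-; apply: fQ.
by move=> Qx; apply: disj (fQ x) Qx.
Qed.

Lemma countable_nonempty_parts (X K : Type) (P : K -> set X) :
  countable [set: X] -> (forall k k' x, P k x -> P k' x -> k = k') ->
  countable [set k | P k !=set0].
Proof.
move=> /countable_injP[h h_inj] disj; apply/countable_injP.
have /choice[r hr] : forall k, exists n : nat,
    P k !=set0 -> exists2 x, P k x & h x = n.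
  move=> k; have [[x Px]|nP] := pselect (P k !=set0); last by exists 0%N.
  by exists (h x) => _; exists x.
exists r => k k'; rewrite !in_setE => /(hr k)[x Px hx] /(hr k')[x' Px' hx'] rkk'.
have xx' : x = x' by apply: h_inj; rewrite ?in_setE // hx hx' rkk'.
by apply: (disj _ _ x) => //; rewrite xx'.
Qed.

Lemma countable_infinite_parts (X K : Type) (P : K -> set X) (S : set K) :
  countable [set: X] -> (forall k k' x, P k x -> P k' x -> k = k') ->
  S `<=` [set k | infinite_set (P k)] -> countable S.
Proof.
move=> cX disj SP; apply: sub_countable (subset_card_le _) (countable_nonempty_parts cX disj).
by move=> k /SP /infinite_setN0.
Qed.

Lemma finite_setI_preimage (X U : Type) (S : set X) (F : set U) (g : X -> U) :
  {in S &, injective g} -> finite_set F -> finite_set (S `&` g @^-1` F).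
Proof.
move=> g_inj fF.
have g_inj' : {in S `&` g @^-1` F &, injective g}.
  by move=> a b; rewrite !in_setE => -[Sa _] [Sb _]; apply: g_inj; rewrite in_setE.
rewrite -(eq_finite_set (inj_card_eq g_inj')).
by apply: sub_finite_set fF => _ [x [_ Fx] <-].
Qed.

Section Pullback.
Context (X : Type) (I : set (set X)) (hI : is_ideal I).

Lemma Fin2_preimage_ideal (S : set X) (g : X -> nat * nat) : {in S &, injective g} ->
  (forall j, I (S `&` [set x | (g x).1 = j])) ->
  (forall B, B `<=` S -> (forall j, finite_set (B `&` [set x | (g x).1 = j])) -> I B) ->
  forall A, Fin2 A -> I (S `&` g @^-1` A).
Proof.
move=> g_inj col_ideal hB A hA.
pose N := [set n | infinite_set [set m | A (n, m)]].
have I_thin : I [set x | (S `&` g @^-1` A) x /\ ~ N (g x).1].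
  apply: hB; first by move=> x [[]].
  move=> j; have [Nj|nNj] := pselect (N j).
    by apply: sub_finite_set (finite_set0 X) => x [[_ nN] /= e]; apply: nN; rewrite e.
  have fAj : finite_set [set p | p.1 = j /\ A p].
    apply: sub_finite_set (finite_image (pair j) (contrapT nNj)) => -[a b] /= [-> Ab].
    by exists b.
  apply: sub_finite_set (finite_setI_preimage g_inj fAj) => x [[[Sx Ax] _] /= e].
  by split.
apply: (ideal_sub hI (idealU hI (ideal_bigcup hI hA (fun j _ => col_ideal j)) I_thin)).
move=> x [Sx Ax]; have [Nx|nNx] := pselect (N (g x).1); last by right.
by left; exists (g x).1.
Qed.

Lemma Fin2_le_of_columns (f : X -> nat * nat) : bijective f ->
  (forall j, I [set x | (f x).1 = j]) ->
  (forall B, (forall j, finite_set (B `&` [set x | (f x).1 = j])) -> I B) ->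
  ideal_le Fin2 I.
Proof.
move=> fb col_ideal hB; exists f; split => // A hA.
have f_inj : {in [set: X] &, injective f} by move=> a b _ _; apply: bij_inj.
have := Fin2_preimage_ideal f_inj _ _ hA; rewrite setTI; apply.
  by move=> j; rewrite setTI.
by move=> B _; apply: hB.
Qed.

Lemma BI_le_of_columns (f : X -> nat * (nat * nat)) : bijective f ->
  (forall i j, I [set x | (f x).1 = i /\ (f x).2.1 = j]) ->
  (forall i B, B `<=` [set x | (f x).1 = i] ->
     (forall j, finite_set (B `&` [set x | (f x).2.1 = j])) -> I B) ->
  (forall B, (forall i, finite_set (B `&` [set x | (f x).1 = i])) -> I B) ->
  ideal_le BI I.
Proof.
move=> fb col_ideal sec_ideal hB; exists f; split => // A [k [hlt hge]].
have f_inj : injective f by apply: bij_inj.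
have I_head : forall i, (i < k)%N ->
    I ([set x | (f x).1 = i] `&` (snd \o f) @^-1` [set jl | A (i, jl)]).
  move=> i ik; apply: Fin2_preimage_ideal (hlt i ik).
  - move=> a b; rewrite !in_setE /= => ea eb e2; apply: f_inj.
    by move: ea eb e2; case: (f a) => ? ?; case: (f b) => ? ? /= -> -> ->.
  - by move=> j; apply: (ideal_sub hI (col_ideal i j)) => x [].
  - by move=> B BS hj; apply: (sec_ideal i B BS) => j; apply: hj.
have I_tail : I [set x | A (f x) /\ (k <= (f x).1)%N].
  apply: hB => i; have [ik|ki] := ltnP i k.
    apply: sub_finite_set (finite_set0 X) => x [[_ kx] /= e].
    by move: kx; rewrite e leqNgt ik.
  have f_inj' : {in [set: X] &, injective f} by move=> a b _ _; apply: f_inj.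
  apply: sub_finite_set (finite_setI_preimage f_inj' (finite_image (pair i) (hge i ki))).
  move=> x [[Ax _] /= e]; split => //=.
  by exists (f x).2 => //=; case: (f x) e Ax => ? ? /= ->.
apply: (ideal_sub hI (idealU hI (ideal_bigcup hI (finite_II k) I_head) I_tail)).
move=> x /= Ax; have [xk|kx] := ltnP (f x).1 k; last by right.
by left; exists (f x).1 => //; split => //=; case: (f x) Ax.
Qed.

Hypothesis hXc : countable [set: X].

Lemma Fin2_le_of_infinite_partition (Q : nat -> set X) : is_partition Q ->
  (forall j, infinite_set (Q j)) -> (forall j, I (Q j)) ->
  (forall B, (forall j, finite_set (B `&` Q j)) -> I B) -> ideal_le Fin2 I.
Proof.
move=> hQ iQ IQ hB; have [f [fb fQ]] := partition_bijection hXc hQ iQ.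
apply: (Fin2_le_of_columns fb) => [j|B hBj]; first by rewrite (partition_fiberE _ hQ fQ).
by apply: hB => j; rewrite -(partition_fiberE _ hQ fQ).
Qed.

Lemma BI_le_of_infinite_partition (Q : nat * nat -> set X) : is_partition Q ->
  (forall p, infinite_set (Q p)) -> (forall p, I (Q p)) ->
  (forall i B, B `<=` [set x | exists j, Q (i, j) x] ->
     (forall j, finite_set (B `&` Q (i, j))) -> I B) ->
  (forall B, (forall i, finite_set (B `&` [set x | exists j, Q (i, j) x])) -> I B) ->
  ideal_le BI I.
Proof.
move=> hQ iQ IQ sec_ideal hB; have [f' [[h hK Kh] fQ]] := partition_bijection hXc hQ iQ.
pose f x := ((f' x).1.1, ((f' x).1.2, (f' x).2)).
have fb : bijective f.
  exists (fun q => h ((q.1, q.2.1), q.2.2)) => [x|[a [c d]]]; last by rewrite /f /= Kh.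
  by rewrite /f /= -!surjective_pairing hK.
have colE i j : [set x | (f x).1 = i /\ (f x).2.1 = j] = Q (i, j).
  rewrite -(partition_fiberE _ hQ fQ); apply/seteqP; split => x /=.
    by move=> [<- <-]; rewrite -surjective_pairing.
  by move=> ->.
have secE i : [set x | (f x).1 = i] = [set x | exists j, Q (i, j) x].
  apply/seteqP; split => x /=; first by move=> <-; exists (f x).2.1; rewrite -colE.
  by move=> [j]; rewrite -colE => -[].
apply: (BI_le_of_columns fb) => [i j|i B|B]; rewrite ?colE ?secE //.
  move=> BS hBj; apply: sec_ideal BS _ => j; apply: sub_finite_set (hBj j) => x [Bx Qx].
  by split => //; move: Qx; rewrite -colE => -[].
by move=> hBi; apply: hB => i; rewrite -secE.
Qed.

End Pullback.

Section Fin2Partition.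
Context (X : Type) (I : set (set X)) (hI : is_ideal I) (hXc : countable [set: X]).
Context (K : Type) (P : K -> set X) (hP : is_partition P).
Hypothesis P_ideal : forall k, I (P k).
Hypothesis thin_ideal : forall B, (forall k, finite_set (B `&` P k)) -> I B.

Local Notation S := [set k | infinite_set (P k)].
Local Notation J := [set x | forall k, P k x -> ~ S k].

Let J_ideal : I J.
Proof.
apply: thin_ideal => k; have [Sk|nSk] := pselect (S k).
  by apply: sub_finite_set (finite_set0 X) => x [Jx Px]; apply: (Jx k).
by apply: sub_finite_set (contrapT nSk) => x [].
Qed.

Let S_infinite : infinite_set S.
Proof.
move=> fS; apply: (ideal_setT hI).
apply: (ideal_sub hI (idealU hI (ideal_bigcup hI fS (fun k _ => P_ideal k)) J_ideal)).
move=> x _; have [[k [Sk Pk]]|nk] := pselect (exists k, S k /\ P k x).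
  by left; exists k.
by right => k Pk Sk; apply: nk; exists k.
Qed.

Lemma Fin2_le_of_partition : ideal_le Fin2 I.
Proof.
case: hP => cover disj.
have [e [eS e_inj e_surj]] := countable_infinite_enum
  (countable_infinite_parts hXc disj (@subset_refl _ S)) S_infinite.
pose Q j := [set x | P (e j) x \/ (j = 0%N /\ J x)].
have Q_disj j j' x : Q j x -> Q j' x -> j = j'.
  move=> [Pj|[-> Jx]] [Pj'|[-> Jx']] //.
  - by apply: e_inj; apply: disj Pj Pj'.
  - by case: (Jx' _ Pj (eS j)).
  - by case: (Jx _ Pj' (eS j')).
have Q_cover x : exists j, Q j x.
  have [k Pk] := cover x; have [Sk|nSk] := pselect (S k).
    by have [n en] := e_surj k Sk; exists n; left; rewrite en.
  by exists 0%N; right; split => // k' Pk'; rewrite (disj _ _ _ Pk' Pk).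
apply: (Fin2_le_of_infinite_partition hI hXc (conj Q_cover Q_disj)) => [j|j|B hB].
- by apply: (sub_infinite_set _ (eS j)) => x Px; left.
- apply: (ideal_sub hI (idealU hI (P_ideal (e j)) J_ideal)).
  by move=> x [Px|[_ Jx]]; [left|right].
apply: thin_ideal => k; have [Sk|nSk] := pselect (S k).
  have [n en] := e_surj k Sk; apply: sub_finite_set (hB n) => x [Bx Px].
  by split => //; left; rewrite en.
by apply: sub_finite_set (contrapT nSk) => x [].
Qed.

End Fin2Partition.

Section BIPartition.
Context (X : Type) (I : set (set X)) (hI : is_ideal I) (hXc : countable [set: X]).
Context (K : Type) (P : K -> set X) (hP : is_partition P) (b : K -> nat).
Local Notation blk i := [set x | exists2 k, b k = i & P k x].
Hypothesis P_ideal : forall k, I (P k).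
Hypothesis block_thin_ideal : forall i B, B `<=` blk i ->
  (forall k, finite_set (B `&` P k)) -> I B.
Hypothesis thin_ideal : forall B, (forall i, finite_set (B `&` blk i)) -> I B.
Hypothesis not_Fin2_le : ~ ideal_le Fin2 I.

Local Notation G := [set i | infinite_set [set k | b k = i /\ infinite_set (P k)]].
Local Notation Jb i := [set x | blk i x /\ forall k, P k x -> finite_set (P k)].

Let disj := hP.2.

Let blk_disj i i' x : blk i x -> blk i' x -> i = i'.
Proof. by move=> [k <- Pk] [k' <- Pk']; rewrite (disj Pk Pk'). Qed.

Let Jb_ideal i : I (Jb i).
Proof.
apply: (block_thin_ideal (i := i)); first by move=> x [].
move=> k; have [fk|ik] := pselect (finite_set (P k)).
  by apply: sub_finite_set fk => x [].
by apply: sub_finite_set (finite_set0 X) => x [[_ h] Pk]; apply: ik; apply: h.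
Qed.

Let poor_block_ideal i : ~ G i -> I (blk i).
Proof.
move=> /contrapT fG.
apply: (ideal_sub hI (idealU hI (ideal_bigcup hI fG (fun k _ => P_ideal k)) (Jb_ideal i))).
move=> x bx; have [[k [bk Pk ik]]|nk] :=
  pselect (exists k, [/\ b k = i, P k x & infinite_set (P k)]); first by left; exists k.
right; split => // k Pk; apply: contrapT => ik; apply: nk; exists k; split => //.
by case: bx => k' <- Pk'; rewrite (disj Pk Pk').
Qed.

(* If [G] were finite, keeping the parts of the blocks in [G] and merging each other
   block into a single part would give a partition as in [Fin2_le_of_partition]. *)
Let coarse (z : K + nat) := match z with
  | inl k => [set x | G (b k) /\ P k x]
  | inr i => [set x | ~ G i /\ blk i x] end.

Let coarse_partition : is_partition coarse.
Proof.
split=> [x|[k|i] [k'|i'] x /=].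
  have [k Pk] := hP.1 x; have [Gk|nGk] := pselect (G (b k)); first by exists (inl k).
  by exists (inr (b k)); split => //; exists k.
- by move=> [_ Pk] [_ Pk']; rewrite (disj Pk Pk').
- by move=> [Gk Pk] [nG [k2 bk Pk']]; rewrite -bk -(disj Pk Pk') in nG.
- by move=> [nG [k2 bk Pk']] [Gk Pk]; rewrite -bk -(disj Pk Pk') in nG.
- by move=> [_ b1] [_ b2]; rewrite (blk_disj b1 b2).
Qed.

Let coarse_ideal z : I (coarse z).
Proof.
case: z => [k|i] /=; first by apply: (ideal_sub hI (P_ideal k)) => x [].
have [Gi|nGi] := pselect (G i).
  by apply: (ideal_sub hI (ideal_finite hI (finite_set0 X))) => x [].
by apply: (ideal_sub hI (poor_block_ideal nGi)) => x [].
Qed.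

Let coarse_thin_ideal : finite_set G ->
  forall B, (forall z, finite_set (B `&` coarse z)) -> I B.
Proof.
move=> fG B hB.
have I_rich i : G i -> I (B `&` blk i).
  move=> Gi; apply: (block_thin_ideal (i := i)); first by move=> x [].
  move=> k; have [bk|bk] := eqVneq (b k) i.
    by apply: sub_finite_set (hB (inl k)) => x [[Bx _] Pk]; split => //=; rewrite bk.
  apply: sub_finite_set (finite_set0 X) => x [[_ [k' bk' Pk']] Pk].
  by move/eqP: bk; apply; rewrite (disj Pk Pk').
have I_poor : I [set x | B x /\ exists2 i, ~ G i & blk i x].
  apply: thin_ideal => i; have [Gi|nGi] := pselect (G i).
    apply: sub_finite_set (finite_set0 X) => x [[_ [i' nG bi']] bi].
    by apply: nG; rewrite (blk_disj bi' bi).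
  by apply: sub_finite_set (hB (inr i)) => x [[Bx _] bi]; split.
apply: (ideal_sub hI (idealU hI (ideal_bigcup hI fG I_rich) I_poor)) => x Bx.
have [k Pk] := hP.1 x; have [Gk|nGk] := pselect (G (b k)).
  by left; exists (b k) => //; split => //; exists k.
by right; split => //; exists (b k) => //; exists k.
Qed.

Let G_infinite : infinite_set G.
Proof.
move=> fG; apply: not_Fin2_le.
exact: (Fin2_le_of_partition hI hXc coarse_partition coarse_ideal (coarse_thin_ideal fG)).
Qed.

Section Grid.
Variables (g : nat -> nat) (e : nat -> nat -> K).
Hypothesis g_enum : [/\ forall s, G (g s), injective g & forall i, G i -> exists s, g s = i].
Hypothesis e_enum : forall s, [/\ forall n, b (e s n) = g s /\ infinite_set (P (e s n)),
  injective (e s) & forall k, b k = g s /\ infinite_set (P k) -> exists n, e s n = k].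

Let e_blk s n : b (e s n) = g s. Proof. by case: (e_enum s) => /(_ n)[]. Qed.
Let e_inf s n : infinite_set (P (e s n)). Proof. by case: (e_enum s) => /(_ n)[]. Qed.

(* Row [s] consists of the infinite parts of the [s]-th block of [G]; its column 0 also
   receives the finite parts of that block and, when [s] is not in [G], the whole block
   [s]. *)
Let Q (p : nat * nat) := [set x | P (e p.1 p.2) x \/
  (p.2 = 0%N /\ (Jb (g p.1) x \/ (~ G p.1 /\ blk p.1 x)))].
Let row s := [set x | exists j, Q (s, j) x].

Let Q_blk s j x : Q (s, j) x -> blk (g s) x \/ (~ G s /\ blk s x).
Proof. by move=> [Px|[_ [[bx _]|[nG bx]]]]; [left; exists (e s j)|left|right]. Qed.

Let Q_blk_disj s s' j j' x : Q (s, j) x -> Q (s', j') x -> s = s'.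
Proof.
have [gG g_inj _] := g_enum.
move=> /Q_blk[b1|[n1 b1]] /Q_blk[b2|[n2 b2]].
- by apply: g_inj; apply: blk_disj b1 b2.
- by case: n2; rewrite -(blk_disj b1 b2); apply: gG.
- by case: n1; rewrite (blk_disj b1 b2); apply: gG.
- by apply: blk_disj b1 b2.
Qed.

Let Q_disj p p' x : Q p x -> Q p' x -> p = p'.
Proof.
case: p p' => s j [s' j'] Qx Qx'; have ss' := Q_blk_disj Qx Qx'; subst s'.
have [gG _ _] := g_enum; have [_ e_inj _] := e_enum s.
have not_col0 i : P (e s i) x -> ~ (Jb (g s) x \/ (~ G s /\ blk s x)).
  move=> Px [[_ fin]|[nG bx]]; first exact: e_inf (fin _ Px).
  by apply: nG; rewrite -(blk_disj (ex_intro2 _ _ _ (e_blk s i) Px) bx); apply: gG.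
case: Qx Qx' => [Pj|[/= -> Jx]] [Pj'|[/= -> Jx']] //.
- by move: (disj Pj Pj') => /= /e_inj ->.
- by case: (not_col0 j Pj Jx').
- by case: (not_col0 j' Pj' Jx).
Qed.

Let rich_blk_row s x : blk (g s) x -> row s x.
Proof.
move=> [k bk Pk]; have [ik|fk] := pselect (infinite_set (P k)).
  by have [_ _ /(_ k (conj bk ik))[n en]] := e_enum s; exists n; left; rewrite /= en.
exists 0%N; right; split => //; left; split; first by exists k.
by move=> k' Pk'; rewrite (disj Pk' Pk); apply: contrapT.
Qed.

Let poor_blk_row i x : ~ G i -> blk i x -> row i x.
Proof. by move=> nG bx; exists 0%N; right; split => //; right. Qed.

Let Q_partition : is_partition Q.
Proof.
split=> [x|]; last exact: Q_disj.
have [k Pk] := hP.1 x; have [Gk|nGk] := pselect (G (b k)).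
  have [_ _ /(_ _ Gk)[s gs]] := g_enum.
  by have [j Qj] := @rich_blk_row s x (ex_intro2 _ _ k (esym gs) Pk); exists (s, j).
by have [j Qj] := poor_blk_row nGk (ex_intro2 _ _ k erefl Pk); exists (b k, j).
Qed.

Let Q_ideal p : I (Q p).
Proof.
case: p => s j; have I_poor : I [set x | ~ G s /\ blk s x].
  have [Gs|nGs] := pselect (G s).
    by apply: (ideal_sub hI (ideal_finite hI (finite_set0 X))) => x [].
  by apply: (ideal_sub hI (poor_block_ideal nGs)) => x [].
apply: (ideal_sub hI (idealU hI (P_ideal (e s j)) (idealU hI (Jb_ideal (g s)) I_poor))).
by move=> x [Px|[_ [Jx|bx]]]; [left|right; left|right; right].
Qed.

Let row_thin_ideal s B : B `<=` row s -> (forall j, finite_set (B `&` Q (s, j))) -> I B.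
Proof.
move=> Brow hBj; have I_rich : I (B `&` blk (g s)).
  apply: (block_thin_ideal (i := g s)); first by move=> x [].
  move=> k; have [ik|fk] := pselect (infinite_set (P k)); last first.
    by apply: sub_finite_set (contrapT fk) => x [].
  have [bk|bk] := eqVneq (b k) (g s).
    have [_ _ /(_ k (conj bk ik))[n en]] := e_enum s.
    by apply: sub_finite_set (hBj n) => x [[Bx _] Pk]; split => //; left; rewrite /= en.
  apply: sub_finite_set (finite_set0 X) => x [[_ [k' bk' Pk']] Pk].
  by move/eqP: bk; apply; rewrite (disj Pk Pk').
apply: (ideal_sub hI (idealU hI I_rich (ideal_finite hI (hBj 0%N)))) => x Bx.
have [j Qj] := Brow x Bx; case: (Qj) => [Pj|[/= j0 _]].
  by left; split => //; exists (e s j).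
by right; split => //; rewrite -j0.
Qed.

Lemma BI_le_of_enum : ideal_le BI I.
Proof.
apply: (BI_le_of_infinite_partition hI hXc Q_partition) => [[s j]|p|i B|B hB].
- have QP : P (e s j) `<=` Q (s, j) by move=> x Px; left.
  by move=> /(sub_finite_set QP); apply: e_inf.
- exact: Q_ideal.
- exact: row_thin_ideal.
apply: thin_ideal => i; have [Gi|nGi] := pselect (G i).
  have [_ _ /(_ _ Gi)[s <-]] := g_enum; apply: sub_finite_set (hB s) => x [Bx bx].
  by split => //; apply: rich_blk_row.
by apply: sub_finite_set (hB i) => x [Bx bx]; split => //; apply: poor_blk_row.
Qed.

End Grid.

Lemma BI_le_of_partition : ideal_le BI I.
Proof.
have [g g_enum] := countable_infinite_enum (countableP G) G_infinite.
have /choice[e e_enum] : forall s, exists e : nat -> K,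
    [/\ forall n, b (e n) = g s /\ infinite_set (P (e n)), injective e &
        forall k, b k = g s /\ infinite_set (P k) -> exists n, e n = k].
  have [gG _ _] := g_enum; move=> s; apply: countable_infinite_enum (gG s).
  by apply: (countable_infinite_parts hXc disj) => k [].
exact: (BI_le_of_enum g_enum e_enum).
Qed.

End BIPartition.

(** * FinBW spaces *)

Section FinBWBasics.
Context (X : Type) (I : set (set X)) (hI : is_ideal I) (hXc : countable [set: X]).

Lemma not_FinBW_witness (T : topologicalType) : hausdorff_space T -> ~ FinBW I T ->
  exists x : X -> T, forall A, (exists y, conv_along x A y) -> I A.
Proof.
move=> hT nF; apply: contrapT => hn; apply: nF; split => // x.
apply: contrapT => hx; apply: hn; exists x => A hA; apply: contrapT => nA.
by apply: hx; exists A.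
Qed.

Lemma FinBW_seq_compact (T : topologicalType) : infinite_set [set: X] ->
  FinBW I T -> seq_compact_along T.
Proof.
move=> hXi [_ hF] s; have [e [_ e_inj e_surj]] := countable_infinite_enum hXc hXi.
have /choice[e' he'] : forall x : X, exists n, e n = x by move=> x; apply: e_surj.
have [A [nA [y hy]]] := hF (s \o e'); exists (e @^-1` A).
  move=> fN; apply: nA; apply: ideal_finite => //.
  by apply: sub_finite_set (finite_image e fN) => a Aa; exists (e' a); rewrite /= he'.
exists y; have e'K : (s \o e') \o e = s.
  by apply: funext => m /=; congr s; apply: e_inj; rewrite he'.
by rewrite -e'K; apply: conv_along_comp.
Qed.

Lemma not_tall_FinBW (T : topologicalType) : ~ tall I -> hausdorff_space T ->
  seq_compact_along T -> FinBW I T.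
Proof.
move=> not_tall hT sc; split => // x.
have [A [iA hA]] : exists A, infinite_set A /\
    forall B, B `<=` A -> infinite_set B -> ~ I B.
  apply: contrapT => hn; apply: not_tall => A iA; apply: contrapT => hB; apply: hn.
  by exists A; split => // B BA iB IB; apply: hB; exists B.
have cA : countable A := sub_countable (subset_card_le (subsetT A)) hXc.
have [e [eA e_inj _]] := countable_infinite_enum cA iA.
have [N iN [y hy]] := sc (x \o e).
exists (e @` N); split; last by exists y; apply: conv_along_image.
by apply: hA (image_infinite e_inj iN) => _ [n _ <-]; apply: eA.
Qed.

Lemma finite_FinBW (T : topologicalType) : hausdorff_space T ->
  finite_set [set: T] -> FinBW I T.
Proof.
move=> hT fT; split => // x.
have [[t nt]|hall] := pselect (exists t, ~ I (x @^-1` [set t])).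
  by exists (x @^-1` [set t]); split => //; exists t; apply: conv_along_cst.
exfalso; apply: (ideal_setT hI).
have I_all : I (\bigcup_(t in [set: T]) x @^-1` [set t]).
  apply: ideal_bigcup => // t _; apply: contrapT => nt; apply: hall; by exists t.
by apply: (ideal_sub hI I_all) => a _; exists (x a).
Qed.

Lemma Fin2_le_not_FinBW (T : topologicalType) : ideal_le Fin2 I ->
  hausdorff_space T -> infinite_set [set: T] -> ~ FinBW I T.
Proof.
move=> [f [fb hf]] hT iT [_ hF]; have [d [_ d_inj]] := infinite_set_injseq iT.
have [A [nA [y hy]]] := hF (fun a => d (f a).1); apply: nA.
have col_limit n : infinite_set [set m | (f @` A) (n, m)] -> d n = y.
  move=> icol; apply: (conv_along_cst_unique hT (A' := [set a | A a /\ (f a).1 = n]) _ _ _ hy).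
  - by move=> a [].
  - move=> fA1; apply: icol; apply: sub_finite_set (finite_image (snd \o f) fA1).
    by move=> m [a Aa fa]; exists a; [split => //; rewrite fa|rewrite /= fa].
  - by move=> a [_ <-].
have : Fin2 (f @` A).
  apply: subsingleton_finite => n n' /col_limit dn /col_limit dn'.
  by apply: d_inj; rewrite dn dn'.
by move/hf/(ideal_sub hI); apply => a Aa; exists a.
Qed.

End FinBWBasics.

Section BoringSpace.
Context (T : topologicalType) (hT : hausdorff_space T).

Lemma hausdorff_finite_sep (F : set T) (f : T) : finite_set F ->
  exists2 U, nbhs f U & forall g, F g -> g <> f -> exists2 V, nbhs g V & U `&` V = set0.
Proof.
move=> fF; have /choice[AB hAB] : forall g, exists AB : set T * set T,
    [/\ nbhs f AB.1, nbhs g AB.2 & g <> f -> AB.1 `&` AB.2 = set0].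
  move=> g; have [->|gf] := pselect (g = f).
    by exists (setT, setT); split => //=; apply: filterT.
  by have [A [B [hA hB AB0]]] := hausdorff_sep hT (nesym gf); exists (A, B).
exists (\bigcap_(g in F) (AB g).1).
  by rewrite -(fset_setK fF); apply: filter_bigI => g _; case: (hAB g).
move=> g Fg gf; exists (AB g).2; first by case: (hAB g).
have [_ _ /(_ gf) AB0] := hAB g; apply/seteqP; split => // t [Ut Vt].
by rewrite -AB0; split => //; apply: Ut.
Qed.

Lemma boring_set_conv (F : set T) : seq_compact T ->
  (forall s : nat -> T, infinite_set (range s) ->
     (exists y : T, s @ \oo --> y) -> exists y, F y /\ s @ \oo --> y) ->
  forall W, infinite_set W ->
  exists2 W', W' `<=` W /\ infinite_set W' & exists2 z, F z & conv_along id W' z.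
Proof.
move=> sc hF W iW; have [w [wW w_inj]] := infinite_set_injseq iW.
have [phi [phi_incr [y hy]]] := sc w.
have wphi_inj : injective (w \o phi) by move=> m n /w_inj /(incn_inj (leq_mono phi_incr)).
have [z [Fz /cvg_conv_alongT hz]] := hF _ (injective_range_infinite wphi_inj) (ex_intro _ y hy).
exists (range (w \o phi)); last by exists z => //; apply: conv_along_image.
by split; [move=> _ [k _ <-]; apply: wW|exact: injective_range_infinite].
Qed.

(* [U f] misses a neighbourhood of every other point of [F], so by boringness any
   infinite part of [U f] must accumulate at [f]; outside the [U f], an infinite set
   would accumulate at some point of [F] without entering its neighbourhood. *)
Lemma boring_cover : boring_space T -> exists F : set T, exists U : T -> set T,
  [/\ finite_set F, forall f, F f -> conv_along id (U f) f &
      finite_set (~` \bigcup_(f in F) U f)].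
Proof.
move=> [sc [F [fF hF]]]; have set_conv := boring_set_conv sc hF.
have /choice[U hU] : forall f, exists U, nbhs f U /\
    forall g, F g -> g <> f -> exists2 V, nbhs g V & U `&` V = set0.
  by move=> f; have [U ? ?] := hausdorff_finite_sep f fF; exists U.
exists F, U; split => //.
  move=> f Ff V hV; apply: contrapT => iW.
  have [W' [W'sub iW'] [z Fz hz]] := set_conv _ iW; apply: iW'.
  have [zf|zf] := pselect (z = f).
    by subst z; apply: sub_finite_set (hz V hV) => t W't; split => //; case: (W'sub t W't).
  have [V' hV' UV'0] := (hU f).2 z Fz zf.
  apply: sub_finite_set (hz V' hV') => t W't; split => // V't.
  have : (U f `&` V') t by split => //; case: (W'sub t W't).
  by rewrite UV'0.
apply: contrapT => iK; have [W' [W'sub iW'] [z Fz hz]] := set_conv _ iK.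
apply: iW'; apply: sub_finite_set (hz _ (hU z).1) => t W't; split => // Uzt.
by apply: (W'sub t W't); exists z.
Qed.

End BoringSpace.

Lemma boring_FinBW (X : Type) (I : set (set X)) (hI : is_ideal I)
    (hXc : countable [set: X]) (T : topologicalType) :
  ~ ideal_le Fin2 I -> hausdorff_space T -> boring_space T -> FinBW I T.
Proof.
move=> nF2 hT bT; apply: contrapT => nFB; have [x H] := not_FinBW_witness hT nFB.
have [F [U [fF hU fK]]] := boring_cover hT bT; apply: nF2.
apply: (Fin2_le_of_partition hI hXc (fibers_partition x)).
  by move=> t; apply: H; exists t; apply: conv_along_cst.
move=> B hB; have I_conv f : F f -> I (B `&` x @^-1` U f).
  by move=> Ff; apply: H; exists f; apply: conv_along_fibers (hU f Ff).
apply: (ideal_sub hI (idealU hI (ideal_bigcup hI fF I_conv)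
  (ideal_finite hI (finite_fibers_preimage hB fK)))) => n Bn.
have [[f Ff Uf]|nU] := pselect ((\bigcup_(f in F) U f) (x n)); first by left; exists f.
by right.
Qed.

Section NotBoring.
Context (T : topologicalType) (hT : hausdorff_space T).

Lemma conv_along_sep (V V' : set T) a b : a <> b ->
  conv_along id V a -> conv_along id V' b -> finite_set (V `&` V').
Proof.
move=> ab ha hb; have [A [B [hA hB AB0]]] := hausdorff_sep hT ab.
have : finite_set ([set t | V t /\ ~ A t] `|` [set t | V' t /\ ~ B t]).
  by rewrite finite_setU; split; [apply: ha|apply: hb].
apply: sub_finite_set => t [Vt V't].
have [At|nAt] := pselect (A t); last by left.
have [Bt|nBt] := pselect (B t); last by right.
by have : (A `&` B) t by []; rewrite AB0.
Qed.

Lemma not_boring_conv_outside : seq_compact T -> ~ boring_space T ->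
  forall F : set T, finite_set F ->
  exists2 y, ~ F y & exists2 V, infinite_set V & conv_along id V y.
Proof.
move=> sc nb F fF; apply: contrapT => hn; apply: nb; split => //.
exists F; split => // s irs [y hy]; apply: contrapT => hno; apply: hn; exists y.
  by move=> Fy; apply: hno; exists y.
by exists (range s) => //; apply: conv_along_image; apply/cvg_conv_alongT.
Qed.

Hypothesis conv_outside : forall F : set T, finite_set F ->
  exists2 y, ~ F y & exists2 V, infinite_set V & conv_along id V y.

Lemma disjoint_conv_family : exists (y : nat -> T) (D : nat -> set T),
  [/\ injective y, forall n, infinite_set (D n), forall n, conv_along id (D n) (y n) &
      forall m n t, D m t -> D n t -> m = n].
Proof.
have /choice[Phi hPhi] : forall F : set T, exists p : T * set T, finite_set F ->
    [/\ ~ F p.1, infinite_set p.2 & conv_along id p.2 p.1].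
  move=> F; have [fF|nF] := pselect (finite_set F).
    by have [y Fy [V iV cV]] := conv_outside fF; exists (y, V).
  by have [t _] := infinite_setN0 nF; exists (t, set0).
pose ys := fix ys n := if n is m.+1 then (Phi [set` ys m]).1 :: ys m else [::].
pose y n := (Phi [set` ys n]).1; pose V n := (Phi [set` ys n]).2.
have hV n : [/\ ~ [set` ys n] (y n), infinite_set (V n) & conv_along id (V n) (y n)].
  exact/hPhi/finite_seq.
have y_ys j n : (j < n)%N -> y j \in ys n.
  elim: n => // n IH; rewrite ltnS leq_eqVlt => /orP[/eqP ->|jn].
    by rewrite /= inE eqxx.
  by rewrite /= inE (IH jn) orbT.
have y_new j n : (j < n)%N -> y j <> y n.
  by move=> jn yjn; case: (hV n) => + _ _; apply; rewrite /= -yjn y_ys.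
(* The limits [y n] are distinct, so [V n] meets each earlier [V j] in a finite set. *)
exists y, (fun n => [set t | V n t /\ forall j, (j < n)%N -> ~ V j t]); split.
- move=> m n ymn; case: (ltngtP m n) => // mn.
    by case: (y_new _ _ mn ymn).
  by case: (y_new _ _ mn (esym ymn)).
- move=> n; have [_ iV _] := hV n.
  have fVV : finite_set (\bigcup_(j in `I_n) (V n `&` V j)).
    apply: bigcup_finite; first exact: finite_II.
    move=> j jn; apply: conv_along_sep (nesym (y_new j n jn)) _ _; first by case: (hV n).
    by case: (hV j).
  apply: (sub_infinite_set _ (infinite_setD iV fVV)) => t [Vt nVV]; split => // j jn Vjt.
  by apply: nVV; exists j.
- by move=> n; case: (hV n) => _ _; apply: conv_alongS => t [].
by move=> m n t [Vm hm] [Vn hn]; case: (ltngtP m n) => // mn; [case: (hn m)|case: (hm n)].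
Qed.

End NotBoring.

Section GridConv.
Context (T : topologicalType) (hT : hausdorff_space T).
Variables (y : nat -> T) (D : nat -> set T) (d : nat -> nat -> T).
Hypothesis y_inj : injective y.
Hypothesis D_conv : forall n, conv_along id (D n) (y n).
Hypothesis D_disj : forall m n t, D m t -> D n t -> m = n.
Hypothesis d_D : forall i j, D i (d i j).
Hypothesis d_inj : forall i, injective (d i).

Let z (p : nat * (nat * nat)) := d p.1 p.2.1.
Variables (B : set (nat * (nat * nat))) (t : T).
Hypothesis B_conv : conv_along z B t.

Let column_limit i j : infinite_set [set l | B (i, (j, l))] -> d i j = t.
Proof.
move=> icol; pose A' := [set p | p.1 = i /\ p.2.1 = j /\ B p].
apply: (conv_along_cst_unique hT (A' := A') _ _ _ B_conv).
- by move=> p [_ []].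
- move=> fA; apply: icol; have inj : {in (fun l => (i, (j, l))) @^-1`
      [set p | p.1 = i /\ p.2.1 = j /\ B p] &, injective (fun l => (i, (j, l)))}.
    by move=> a b _ _ [].
  exact: sub_finite_set (finite_preimage inj fA).
- by move=> p [<- [<- _]].
Qed.

Let section_Fin2 i : Fin2 [set jl | B (i, jl)].
Proof.
apply: subsingleton_finite => j j' /column_limit dj /column_limit dj'.
exact: d_inj (etrans dj (esym dj')).
Qed.

Let infinite_section_limit i : infinite_set [set jl | B (i, jl)] -> D i t \/ t = y i.
Proof.
move=> isec; have [[j ij]|nj] := pselect (exists j, infinite_set [set l | B (i, (j, l))]).
  by left; rewrite -(column_limit ij).
right; pose J := [set j | exists l, B (i, (j, l))].
have iJ : infinite_set J.
  move=> fJ; apply: isec.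
  apply: sub_finite_set (bigcup_finite fJ (F := fun j => pair j @` [set l | B (i, (j, l))]) _).
    by move=> [j l] Bjl; exists j; exists l.
  move=> j _; apply: finite_image; apply: contrapT => ij; apply: nj; by exists j.
apply: (conv_along_unique hT (x := id) (image_infinite (@d_inj i) iJ)).
  apply: (conv_alongS _ (@conv_along_image _ _ _ z id B t B_conv)) => _ [j [l Bl] <-].
  by exists (i, (j, l)).
have h1 : d i @` J `<=` D i by move=> _ [j _ <-]; apply: d_D.
exact: conv_alongS h1 (@D_conv i).
Qed.

Lemma grid_conv_BI : BI B.
Proof.
have : finite_set ([set i | D i t] `|` [set i | t = y i]).
  rewrite finite_setU; split; apply: subsingleton_finite => a b; first exact: D_disj.
  by move=> -> /y_inj.
move=> /(sub_finite_set (@infinite_section_limit)) /finite_nat_bounded[k hk].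
exists k; split=> [i _|i ki]; first exact: section_Fin2.
apply: contrapT => ii.
by move: (hk i ii); rewrite ltnNge ki.
Qed.

End GridConv.

Lemma not_boring_BI_seq (T : topologicalType) : hausdorff_space T ->
  seq_compact T -> ~ boring_space T ->
  exists z : nat * (nat * nat) -> T, forall B, (exists t, conv_along z B t) -> BI B.
Proof.
move=> hT sc nb; have [y [D [y_inj D_inf D_conv D_disj]]] :=
  disjoint_conv_family hT (not_boring_conv_outside sc nb).
have /choice[d hd] : forall n, exists e : nat -> T, (forall m, D n (e m)) /\ injective e.
  by move=> n; apply: infinite_set_injseq (D_inf n).
exists (fun p => d p.1 p.2.1) => B [t Bt].
by apply: (grid_conv_BI hT y_inj D_conv D_disj _ _ Bt) => i; case: (hd i).
Qed.

Lemma FinBW_boring (X : Type) (I : set (set X)) (hI : is_ideal I)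
    (hXc : countable [set: X]) (hXi : infinite_set [set: X]) (T : topologicalType) :
  boring_ideal I -> FinBW I T -> boring_space T.
Proof.
move=> [f [fb hf]] hFB; have sc := (seq_compactP T).2 (FinBW_seq_compact hI hXc hXi hFB).
case: hFB => hT hF; apply: contrapT => nb.
have [z hz] := not_boring_BI_seq hT sc nb; have [A [nA [t ht]]] := hF (z \o f).
have /hz BI_fA : exists t, conv_along z (f @` A) t by exists t; apply: conv_along_image.
by apply: nA; apply: (ideal_sub hI (hf _ BI_fA)) => a Aa; exists a.
Qed.

(** * The test spaces *)

(* The ordinal omega + 1: [None] is the limit of the sequence [Some n]. *)
Definition onat := option nat.
HB.instance Definition _ := Choice.copy onat (option nat).

Definition onat_open (U : set onat) :=
  U None -> exists m, forall n, (m <= n)%N -> U (Some n).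

Lemma onat_openT : onat_open setT. Proof. by move=> _; exists 0%N. Qed.

Lemma onat_openI : setI_closed onat_open.
Proof.
move=> A B hA hB [/hA[m hm] /hB[m' hm']]; exists (maxn m m') => n.
by rewrite geq_max => /andP[mn m'n]; split; [apply: hm|apply: hm'].
Qed.

Lemma onat_open_bigcup (J : Type) (f : J -> set onat) :
  (forall i, onat_open (f i)) -> onat_open (\bigcup_i f i).
Proof.
move=> h [i _ fi]; have [m hm] := h i fi; exists m => n mn; exists i => //; exact: hm.
Qed.

HB.instance Definition _ :=
  isOpenTopological.Build onat onat_openT onat_openI onat_open_bigcup.

Lemma onatE (U : set onat) : open U = onat_open U. Proof. by []. Qed.

Lemma onat_clopen1 n : open [set Some n : onat] /\ open (~` [set Some n : onat]).
Proof.
rewrite !onatE; split=> [//|_].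
by exists n.+1 => k nk [kn]; move: nk; rewrite kn ltnn.
Qed.

Lemma onat_hausdorff : hausdorff_space onat.
Proof.
apply: hausdorff_open_separated => -[n|] [m|] // pq.
- by apply: (isolated_separated pq); case: (onat_clopen1 n).
- by apply: (isolated_separated pq); case: (onat_clopen1 n).
- apply: open_separated_sym; apply: (isolated_separated (nesym pq)).
  all: by case: (onat_clopen1 m).
Qed.

Lemma onat_infinite : infinite_set [set: onat].
Proof.
by move=> fT; apply: (@injective_range_infinite _ Some) => [a b []//|]; exact: sub_finite_set fT.
Qed.

Lemma onat_seq_compact : seq_compact_along onat.
Proof.
move=> s; have [[v iv]|hv] := pselect (exists v, infinite_set (s @^-1` [set v])).
  by exists (s @^-1` [set v]) => //; exists v; apply: conv_along_cst.
exists setT; first exact: infinite_nat.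
exists None => U /nbhs_open_sub[V [oV VN VU]]; have [m hm] := oV VN.
have fin : finite_set (\bigcup_(k in `I_m) s @^-1` [set Some k]).
  apply: bigcup_finite; first exact: finite_II.
  by move=> k _; apply: contrapT => ik; apply: hv; exists (Some k).
apply: sub_finite_set fin => n [_ nU]; case E: (s n) nU => [k|] nU.
  exists k => //=; rewrite ltnNge; apply/negP => mk.
  by apply: nU; apply: VU; apply: hm.
by exfalso; apply: nU; apply: VU.
Qed.

Lemma onat_boring : boring_space onat.
Proof.
split; first exact/seq_compactP/onat_seq_compact.
exists [set None]; split; first exact: finite_set1.
move=> s irs [y hy]; exists y; split => //; case: y hy => [k|] hy //; exfalso.
apply: irs; have [o1 _] := onat_clopen1 k.
have /cvg_conv_alongT/(_ _ (open_nbhs_nbhs (conj o1 erefl))) fk := hy.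
have : finite_set (s @` [set n | [set: nat] n /\ s n <> Some k] `|` [set Some k]).
  by rewrite finite_setU; split; [exact: finite_image fk|exact: finite_set1].
apply: sub_finite_set => _ [n _ <-]; have [->|nk] := pselect (s n = Some k); first by right.
by left; exists n.
Qed.

(* The ordinal omega^2 + 1: [Some (i, None)] is the limit of the column [Some (i, Some j)]
   and [None] is the limit of the columns. *)
Definition onat2 := option (nat * option nat).
HB.instance Definition _ := Choice.copy onat2 (option (nat * option nat)).

Definition onat2_open (U : set onat2) :=
  (forall i, U (Some (i, None)) -> exists m, forall j, (m <= j)%N -> U (Some (i, Some j))) /\
  (U None -> exists m, forall i o, (m <= i)%N -> U (Some (i, o))).

Lemma onat2_openT : onat2_open setT. Proof. by split => [i _|_]; exists 0%N. Qed.

Lemma onat2_openI : setI_closed onat2_open.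
Proof.
move=> A B [hA1 hA2] [hB1 hB2]; split.
  move=> i [/hA1[m hm] /hB1[m' hm']]; exists (maxn m m') => n.
  by rewrite geq_max => /andP[mn m'n]; split; [apply: hm|apply: hm'].
move=> [/hA2[m hm] /hB2[m' hm']]; exists (maxn m m') => n o.
by rewrite geq_max => /andP[mn m'n]; split; [apply: hm|apply: hm'].
Qed.

Lemma onat2_open_bigcup (J : Type) (f : J -> set onat2) :
  (forall i, onat2_open (f i)) -> onat2_open (\bigcup_i f i).
Proof.
move=> h; split.
  move=> i [k _ fi]; have [m hm] := (h k).1 i fi.
  by exists m => n mn; exists k => //; exact: hm.
move=> [k _ fi]; have [m hm] := (h k).2 fi; exists m => n o mn; exists k => //; exact: hm.
Qed.

HB.instance Definition _ :=
  isOpenTopological.Build onat2 onat2_openT onat2_openI onat2_open_bigcup.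

Lemma onat2E (U : set onat2) : open U = onat2_open U. Proof. by []. Qed.

Lemma onat2_clopen1 i j :
  open [set Some (i, Some j) : onat2] /\ open (~` [set Some (i, Some j) : onat2]).
Proof.
rewrite !onat2E; split; first by split=> [i' /= []|//].
split=> [i' _|_].
  by exists j.+1 => k jk [_ kj]; move: jk; rewrite kj ltnn.
by exists i.+1 => i' o ii' [i'i _]; move: ii'; rewrite i'i ltnn.
Qed.

Definition onat2_column i : set onat2 := [set p | exists o, p = Some (i, o)].

Lemma onat2_column_clopen i : open (onat2_column i) /\ open (~` onat2_column i).
Proof.
rewrite !onat2E; split; split.
- by move=> i' [o [-> _]]; exists 0%N => j _; exists (Some j).
- by move=> [o].
- move=> i' ni; exists 0%N => j _ [o [i'i _]]; apply: ni; exists None; by rewrite i'i.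
- by move=> _; exists i.+1 => i' o ii' [o' [i'i _]]; move: ii'; rewrite i'i ltnn.
Qed.

Lemma onat2_hausdorff : hausdorff_space onat2.
Proof.
have iso i j (q : onat2) :
    (Some (i, Some j) : onat2) <> q -> open_separated (Some (i, Some j) : onat2) q.
  by move=> pq; apply: (isolated_separated pq); case: (onat2_clopen1 i j).
have col i (q : onat2) : ~ onat2_column i q -> open_separated (Some (i, None) : onat2) q.
  by case: (onat2_column_clopen i) => oC oCC; apply: clopen_separated => //; exists None.
apply: hausdorff_open_separated => p q pq.
case: p pq => [[i [j|]]|] pq; first exact: iso.
all: case: q pq => [[i' [j'|]]|] pq; try exact/open_separated_sym/iso/nesym.
- by apply: col => -[o [ii' _]]; apply: pq; rewrite ii'.
- by apply: col => -[].
- by apply/open_separated_sym/col => -[].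
- by case: (pq erefl).
Qed.

Definition onat2_row (p : onat2) := if p is Some (i, _) then i else 0%N.

Lemma onat2_column_cvg i :
  (fun j => Some (i, Some j) : onat2) @ \oo --> (Some (i, None) : onat2).
Proof.
apply/cvg_conv_alongT => U /nbhs_open_sub[V [oV Vi VU]]; have [m hm] := oV.1 i Vi.
apply: (sub_finite_set _ (finite_II m)) => j [_ nU] /=; rewrite ltnNge.
by apply/negP => mj; apply: nU; apply: VU; apply: hm.
Qed.

Lemma onat2_not_boring : ~ boring_space onat2.
Proof.
move=> [_ [F [fF hF]]]; have [M hM] := finite_nat_bounded (finite_image onat2_row fF).
have [||y [Fy hy]] := hF (fun j => Some (M, Some j) : onat2).
- by apply: injective_range_infinite => a b [].
- by exists (Some (M, None)); apply: onat2_column_cvg.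
have yM : y = Some (M, None).
  apply: (conv_along_unique onat2_hausdorff infinite_nat); apply/cvg_conv_alongT.
    exact: hy.
  exact: onat2_column_cvg.
by have := hM (onat2_row y) (ex_intro2 _ _ y Fy erefl); rewrite yM ltnn.
Qed.

Lemma not_FinBW_onat2_boring (X : Type) (I : set (set X)) (hI : is_ideal I)
    (hXc : countable [set: X]) :
  ~ ideal_le Fin2 I -> ~ FinBW I onat2 -> boring_ideal I.
Proof.
move=> nF2 nF; have [x H] := not_FinBW_witness onat2_hausdorff nF.
apply: (BI_le_of_partition hI hXc (fibers_partition x) (b := onat2_row)) => //.
- by move=> k; apply: H; exists k; apply: conv_along_cst.
- move=> i B Bi hB; apply: H; exists (Some (i, None)) => U /nbhs_open_sub[V [oV Vi VU]].
  have [m hm] := oV.1 i Vi.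
  have fD : finite_set ([set None] `|` (fun j => Some (i, Some j) : onat2) @` `I_m).
    by rewrite finite_setU; split; [exact: finite_set1|exact/finite_image/finite_II].
  apply: sub_finite_set (finite_fibers_preimage hB fD) => n [Bn nU]; split => //.
  have [k bk /= xk] := Bi n Bn; rewrite xk; case: k bk xk => [[i' [j|]]|] /= bk xk; subst i.
  + right; exists j => //=; rewrite ltnNge; apply/negP => mj.
    by apply: nU; apply: VU; rewrite xk; apply: hm.
  + by exfalso; apply: nU; apply: VU; rewrite xk.
  + by left.
- move=> B hB; apply: H; exists None => U /nbhs_open_sub[V [oV VN VU]].
  have [m hm] := oV.2 VN.
  apply: sub_finite_set (bigcup_finite (finite_II m) (fun i _ => hB i)) => n [Bn nU].
  case E: (x n) => [[i o]|]; last by exfalso; apply: nU; apply: VU; rewrite E.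
  exists i; last by split => //; exists (Some (i, o)).
  by rewrite /= ltnNge; apply/negP => mi; apply: nU; apply: VU; rewrite E; exact: hm.
Qed.

(* The Mrowka space of an almost disjoint family [Ad]: the points [mpt x] are isolated,
   [mset A] is a limit of [A] when [Ad A], and [minfty] compactifies. *)
Definition mrowka (X : Type) (Ad : set (set X)) : Type := {classic (X + (set X + unit))}.
HB.instance Definition _ (X : Type) (Ad : set (set X)) :=
  Choice.copy (mrowka Ad) {classic (X + (set X + unit))}.

Section MrowkaTopology.
Context (X : Type) (Ad : set (set X)).
Local Notation M := (mrowka Ad).

Definition mpt (x : X) : M := inl x.
Definition mset (A : set X) : M := inr (inl A).
Definition minfty : M := inr (inr tt).

Definition mrowka_open (U : set M) :=
  (forall A, Ad A -> U (mset A) -> finite_set [set x | A x /\ ~ U (mpt x)]) /\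
  (U minfty -> exists2 F : set (set X), finite_set F &
     (forall A, ~ U (mset A) -> F A) /\
     finite_set [set x | ~ U (mpt x) /\ ~ exists2 A, F A & Ad A /\ A x]).

Lemma mrowka_openT : mrowka_open setT.
Proof.
split=> [A _ _|_]; first by apply: sub_finite_set (finite_set0 X) => x [_ /(_ I)].
exists set0; first exact: finite_set0.
by split=> [A /(_ I)//|]; apply: sub_finite_set (finite_set0 X) => x [/(_ I)].
Qed.

Lemma mrowka_openI : setI_closed mrowka_open.
Proof.
move=> U V [hU1 hU2] [hV1 hV2]; split.
  move=> A AdA [UA VA].
  have : finite_set ([set x | A x /\ ~ U (mpt x)] `|` [set x | A x /\ ~ V (mpt x)]).
    by rewrite finite_setU; split; [apply: hU1|apply: hV1].
  apply: sub_finite_set => x [Ax nUV]; have [Ux|nUx] := pselect (U (mpt x)); last by left.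
  by right; split => // Vx; apply: nUV.
move=> [/hU2[F fF [hF ffF]] /hV2[G fG [hG ffG]]]; exists (F `|` G).
  by rewrite finite_setU.
split=> [A nUV|].
  have [UA|nUA] := pselect (U (mset A)); last by left; apply: hF.
  by right; apply: hG => VA; apply: nUV.
have : finite_set ([set x | ~ U (mpt x) /\ ~ exists2 A, F A & Ad A /\ A x] `|`
   [set x | ~ V (mpt x) /\ ~ exists2 A, G A & Ad A /\ A x]) by rewrite finite_setU.
apply: sub_finite_set => x [nUV nex]; have [Ux|nUx] := pselect (U (mpt x)).
  right; split; first by move=> Vx; apply: nUV.
  by move=> [A GA hA]; apply: nex; exists A => //; right.
by left; split => // -[A FA hA]; apply: nex; exists A => //; left.
Qed.

Lemma mrowka_open_bigcup (J : Type) (f : J -> set M) :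
  (forall i, mrowka_open (f i)) -> mrowka_open (\bigcup_i f i).
Proof.
move=> h; split.
  move=> A AdA [i _ fi]; apply: sub_finite_set ((h i).1 A AdA fi) => x [Ax nU].
  by split => // fx; apply: nU; exists i.
move=> [i _ fi]; have [F fF [hF ffF]] := (h i).2 fi; exists F => //; split.
  by move=> A nU; apply: hF => fA; apply: nU; exists i.
by apply: sub_finite_set ffF => x [nU nex]; split => // fx; apply: nU; exists i.
Qed.

HB.instance Definition _ :=
  isOpenTopological.Build M mrowka_openT mrowka_openI mrowka_open_bigcup.

Lemma mrowkaE (U : set M) : open U = mrowka_open U. Proof. by []. Qed.

Lemma mpt_inj : injective mpt. Proof. by move=> a b []. Qed.
Lemma mset_inj : injective mset. Proof. by move=> a b []. Qed.

Lemma mpt_clopen1 x : open [set mpt x] /\ open (~` [set mpt x]).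
Proof.
rewrite !mrowkaE; split; first by split=> [A _|] //.
split=> [A _ _|_].
  by apply: sub_finite_set (finite_set1 x) => y [_ /contrapT /mpt_inj].
exists set0; first exact: finite_set0.
split=> [A /contrapT //|].
by apply: sub_finite_set (finite_set1 x) => y [/contrapT /mpt_inj].
Qed.

Lemma mset_clopen1 A : ~ Ad A -> open [set mset A] /\ open (~` [set mset A]).
Proof.
move=> nA; rewrite !mrowkaE; split.
  by split=> [B AdB /mset_inj eB|[]] //; exfalso; apply: nA; rewrite -eB.
split=> [B _ _|_]; first by apply: sub_finite_set (finite_set0 X) => y [_ /contrapT].
exists [set A]; first exact: finite_set1.
split=> [B /contrapT /mset_inj //|].
by apply: sub_finite_set (finite_set0 X) => y [/contrapT].
Qed.

Definition mrowka_nbhs (A E : set X) : set M :=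
  [set p | p = mset A \/ exists2 x, A x /\ ~ E x & p = mpt x].

Lemma mrowka_nbhs_open A E : finite_set (A `&` E) -> open (mrowka_nbhs A E).
Proof.
move=> fAE; rewrite mrowkaE; split=> [B AdB [/mset_inj ->|[x _]] //|[|[x _]] //].
apply: sub_finite_set fAE => y [Ay nN]; split => //; apply: contrapT => nE.
by apply: nN; right; exists y.
Qed.

Lemma mrowka_nbhs_mset_center A E : mrowka_nbhs A E (mset A).
Proof. by left. Qed.

Lemma mrowka_nbhs_mptE A E y : mrowka_nbhs A E (mpt y) <-> A y /\ ~ E y.
Proof. by split=> [[|[z hz /mpt_inj ->]]|[Ay nEy]] //; right; exists y. Qed.

Lemma mrowka_nbhs_mset A E B : mrowka_nbhs A E (mset B) -> B = A.
Proof. by move=> [/mset_inj //|[z _]]. Qed.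

Hypothesis almost_disj : forall A B, Ad A -> Ad B -> A <> B -> finite_set (A `&` B).

Lemma mrowka_nbhs_clopen A : Ad A -> open (~` mrowka_nbhs A set0).
Proof.
move=> AdA; rewrite mrowkaE; split.
  move=> B AdB nN; have BA : B <> A by move=> BA; apply: nN; left; rewrite BA.
  apply: sub_finite_set (almost_disj AdB AdA BA) => y [By nN'].
  by have /mrowka_nbhs_mptE[Ay _] := contrapT nN'.
move=> _; exists [set A]; first exact: finite_set1.
split=> [B nN|]; first exact: (mrowka_nbhs_mset (contrapT nN)).
apply: sub_finite_set (finite_set0 X) => y [nN nex].
by have /mrowka_nbhs_mptE[Ay _] := contrapT nN; apply: nex; exists A.
Qed.

Lemma mrowka_hausdorff : hausdorff_space M.
Proof.
have pt x q : mpt x <> q -> open_separated (mpt x) q.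
  by move=> pq; apply: (isolated_separated pq); case: (mpt_clopen1 x).
have junk A q : ~ Ad A -> mset A <> q -> open_separated (mset A) q.
  by move=> nA pq; apply: (isolated_separated pq); case: (mset_clopen1 nA).
have infty A : open_separated (mset A) minfty.
  have [AdA|nA] := pselect (Ad A); last exact: junk.
  apply: (clopen_separated _ (mrowka_nbhs_clopen AdA)); last 2 first.
  - exact: mrowka_nbhs_mset_center.
  - by move=> [|[x _]].
  by apply: mrowka_nbhs_open; rewrite setI0; exact: finite_set0.
apply: hausdorff_open_separated => p q pq.
case: p pq => [x|[A|[]]] pq; first exact: pt.
all: case: q pq => [y|[B|[]]] pq; try exact/open_separated_sym/pt/nesym.
- have [AdA|nA] := pselect (Ad A); last exact: junk.
  have [AdB|nB] := pselect (Ad B); last exact/open_separated_sym/junk/nesym.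
  have AB : A <> B by move=> AB; apply: pq; rewrite AB.
  exists (mrowka_nbhs A B), (mrowka_nbhs B A).
  split; [ | | exact: mrowka_nbhs_mset_center | exact: mrowka_nbhs_mset_center | ].
  + exact/mrowka_nbhs_open/almost_disj.
  + by apply/mrowka_nbhs_open; rewrite setIC; apply: almost_disj => // /esym.
  + apply/seteqP; split => // -[y|[C|[]]] [h1 h2].
    * by move: h1 h2 => /mrowka_nbhs_mptE[_ ?] /mrowka_nbhs_mptE[? _].
    * by apply: AB; rewrite -(mrowka_nbhs_mset h1) -(mrowka_nbhs_mset h2).
    * by case: h1 => [|[z _]].
- exact: infty.
- exact/open_separated_sym/infty.
- by case: (pq erefl).
Qed.

End MrowkaTopology.

Section MrowkaMAD.
Context (X : Type) (Ad : set (set X)).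
Hypothesis almost_disj : forall A B, Ad A -> Ad B -> A <> B -> finite_set (A `&` B).
Hypothesis maximal : forall D : set X, infinite_set D ->
  exists2 A, Ad A & infinite_set (D `&` A).
Local Notation M := (mrowka Ad).

Lemma mrowka_seq_compact : seq_compact_along M.
Proof.
move=> s; have [[v iv]|hv] := pselect (exists v, infinite_set (s @^-1` [set v])).
  by exists (s @^-1` [set v]) => //; exists v; apply: conv_along_cst.
have fv v : finite_set (s @^-1` [set v]) by apply: contrapT => iv; apply: hv; exists v.
pose Nx := [set n | exists x, s n = mpt Ad x].
pose Na := [set n | exists B, s n = mset Ad B].
have [iNx|fNx] := pselect (infinite_set Nx).
  pose Dx := [set x | exists n, s n = mpt Ad x].
  have iDx : infinite_set Dx.
    move=> fD; apply: iNx; apply: sub_finite_set (bigcup_finite fD (fun x _ => fv (mpt Ad x))).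
    by move=> n [x e]; exists x => //; exists n.
  have [A AdA iDA] := maximal iDx.
  exists [set n | exists2 x, A x & s n = mpt Ad x].
    move=> fN; apply: iDA; have fS n : finite_set [set x | s n = mpt Ad x].
      by apply: subsingleton_finite => a b ea eb; apply: (@mpt_inj X Ad); rewrite -ea -eb.
    apply: sub_finite_set (bigcup_finite fN (fun n _ => fS n)).
    by move=> x [[n e] Ax]; exists n => //; exists x.
  exists (mset Ad A) => U /nbhs_open_sub[V [oV VA VU]].
  apply: sub_finite_set (bigcup_finite (oV.1 A AdA VA) (fun x _ => fv (mpt Ad x))).
  move=> n [[x Ax e] nU]; exists x => //; split => // Vx; apply: nU; apply: VU.
  by rewrite e.
have [iNa|fNa] := pselect (infinite_set Na).
  exists Na => //; exists (minfty Ad) => U /nbhs_open_sub[V [oV VI VU]].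
  have [F fF [hF _]] := oV.2 VI.
  apply: sub_finite_set (bigcup_finite fF (fun B _ => fv (mset Ad B))).
  move=> n [[B e] nU]; exists B => //; apply: hF => VB; apply: nU; apply: VU.
  by rewrite e.
exfalso; apply: infinite_nat.
have : finite_set (Nx `|` Na `|` s @^-1` [set minfty Ad]).
  by rewrite !finite_setU; split; [split; apply: contrapT|apply: fv].
apply: sub_finite_set => n _; case E: (s n) => [x|[B|[]]]; last by right.
  by left; left; exists x.
by left; right; exists B.
Qed.

Lemma mrowka_not_FinBW (I : set (set X)) : is_ideal I -> Ad `<=` I -> ~ FinBW I M.
Proof.
move=> hI AdI [_ hF]; have [A [nA [y hy]]] := hF (mpt Ad).
have iA : infinite_set A by move=> fA; apply: nA; apply: ideal_finite.
case: y hy => [x0|[B|[]]] hy.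
- have [o1 _] := mpt_clopen1 Ad x0; have fE := hy _ (open_nbhs_nbhs (conj o1 erefl)).
  apply: iA; have : finite_set ([set n | A n /\ ~ [set mpt Ad x0] (mpt Ad n)] `|` [set x0]).
    by rewrite finite_setU; split => //; apply: finite_set1.
  apply: sub_finite_set => n An; have [->|nx0] := pselect (n = x0); first by right.
  by left; split => // /(@mpt_inj X Ad).

- have [AdB|nB] := pselect (Ad B).
    have oN : open_nbhs (mset Ad B) (mrowka_nbhs B set0).
      split; last exact: mrowka_nbhs_mset_center.
      by apply: mrowka_nbhs_open; rewrite setI0; apply: finite_set0.
    have fN := ideal_finite hI (hy _ (open_nbhs_nbhs oN)).
    apply: nA; apply: (ideal_sub hI (idealU hI (AdI _ AdB) fN)).
    move=> n An; have [Bn|nBn] := pselect (B n); first by left.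
    by right; split => // /mrowka_nbhs_mptE[].
  have [o1 _] := mset_clopen1 nB; apply: iA.
  by apply: sub_finite_set (hy _ (open_nbhs_nbhs (conj o1 erefl))) => n An; split.
- have [B AdB iAB] := maximal iA.
  have oC : open_nbhs (minfty Ad) (~` mrowka_nbhs B set0).
    by split=> [|[|[z _]]] //; exact: (mrowka_nbhs_clopen almost_disj AdB).
  apply: iAB; apply: sub_finite_set (hy _ (open_nbhs_nbhs oC)) => n [An Bn].
  by split => //; apply; apply/mrowka_nbhs_mptE; split.
Qed.

End MrowkaMAD.

Lemma tall_mad_family (X : Type) (I : set (set X)) : tall I ->
  exists Ad : set (set X), [/\ Ad `<=` I,
    (forall A B, Ad A -> Ad B -> A <> B -> finite_set (A `&` B)) &
    (forall D : set X, infinite_set D -> exists2 A, Ad A & infinite_set (D `&` A))].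
Proof.
move=> tallI.
pose AD := [set Ad : set (set X) | Ad `<=` I /\
  forall A B, Ad A -> Ad B -> A <> B -> finite_set (A `&` B)].
have [Ad [[AdI almost_disj] Ad_max]] : exists Ad, AD Ad /\ forall B, Ad `<` B -> ~ AD B.
  apply: Zorn_bigcup => F FAD Ftot; split; first by move=> A [Ad FAd AdA]; apply: (FAD _ FAd).1.
  move=> A B [Ad1 F1 A1] [Ad2 F2 B2] AB.
  have [s12|s21] := Ftot _ _ F1 F2; first by apply: (FAD _ F2).2 => //; apply: s12.
  by apply: (FAD _ F1).2 => //; apply: s21.
exists Ad; split => // D iD; have [D' [D'D [iD' ID']]] := tallI D iD.
apply: contrapT => hn; have fD' A : Ad A -> finite_set (D' `&` A).
  move=> AdA; apply: contrapT => iDA; apply: hn; exists A => //.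
  by apply: (sub_infinite_set _ iDA) => x [? ?]; split => //; apply: D'D.
have nD' : ~ Ad D' by move=> AdD; apply: iD'; rewrite -(setIid D'); apply: fD'.
apply: (Ad_max (Ad `|` [set D'])).
  by split; [move=> A AA; left|move=> /(_ D' (or_intror erefl))].
split=> [A [/AdI //|->] //|A B [AA|->] [BB|->] AB].
- exact: almost_disj.
- by rewrite setIC; apply: fD'.
- exact: fD'.
- by case: AB.
Qed.

Section Characterizations.
Context (X : Type) (hXc : countable [set: X]) (hXi : infinite_set [set: X]).
Context (I : set (set X)) (hI : is_ideal I).

Lemma FinBW_finite_spacesP : ideal_le Fin2 I <->
  forall T : topologicalType, FinBW I T <-> (hausdorff_space T /\ finite_set [set: T]).
Proof.
split=> [F2I T|hyp].
  split=> [hFB|[hT fT]]; last exact: finite_FinBW.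
  split; first exact: hFB.1.
  by apply: contrapT => iT; apply: (Fin2_le_not_FinBW hI F2I hFB.1 iT hFB).
apply: contrapT => nF2.
have /hyp[_] := boring_FinBW hI hXc nF2 onat_hausdorff onat_boring.
exact: onat_infinite.
Qed.

Lemma FinBW_boring_spacesP : (boring_ideal I /\ ~ ideal_le Fin2 I) <->
  forall T : topologicalType, FinBW I T <-> (hausdorff_space T /\ boring_space T).
Proof.
split=> [[hb nF2] T|hyp].
  split=> [hFB|[hT bT]]; last exact: boring_FinBW.
  by split; [exact: hFB.1|exact: (FinBW_boring hI hXc hXi hb hFB)].
have nF2 : ~ ideal_le Fin2 I.
  move=> F2I; apply: (Fin2_le_not_FinBW hI F2I onat_hausdorff onat_infinite).
  by apply/hyp; split; [exact: onat_hausdorff|exact: onat_boring].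
split => //; apply: (not_FinBW_onat2_boring hI hXc nF2).
by move/hyp => [_ /onat2_not_boring].
Qed.

Lemma FinBW_seq_compact_spacesP : ~ tall I <->
  forall T : topologicalType, FinBW I T <-> (hausdorff_space T /\ seq_compact T).
Proof.
split=> [not_tall T|hyp tallI].
  split=> [hFB|[hT /seq_compactP sc]]; last exact: not_tall_FinBW.
  by split; [exact: hFB.1|exact/seq_compactP/(FinBW_seq_compact hI hXc hXi hFB)].
have [Ad [AdI almost_disj maximal]] := tall_mad_family tallI.
apply: (mrowka_not_FinBW almost_disj maximal hI AdI); apply/hyp.
by split; [exact: mrowka_hausdorff|exact/seq_compactP/mrowka_seq_compact].
Qed.

End Characterizations.

Unset Implicit Arguments.
Set Strict Implicit.

Theorem theorem6p5 (X : Type) (hXc : countable [set: X])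
    (hXi : infinite_set [set: X]) (I : set (set X)) (hI : is_ideal I) :
  (ideal_le Fin2 I <->
     (forall T : topologicalType,
        FinBW I T <-> (hausdorff_space T /\ finite_set [set: T]))) /\
  ((boring_ideal I /\ ~ ideal_le Fin2 I) <->
     (forall T : topologicalType,
        FinBW I T <-> (hausdorff_space T /\ boring_space T))) /\
  (~ tall I <->
     (forall T : topologicalType,
        FinBW I T <-> (hausdorff_space T /\ seq_compact T))).
Proof.
split; first exact: FinBW_finite_spacesP.
split; first exact: FinBW_boring_spacesP.
exact: FinBW_seq_compact_spacesP.
Qed.
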